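(* Let $n\ge1$, $P>0$, $b>0$ and fixed parameters $\widetilde\alpha_r>0$, $r=1,\dots,n$. For $\boldsymbol{\alpha}\in\mathcal{A}:=\{\boldsymbol{\alpha}: 0<\alpha_r\le b,\ r=1,\dots,n\}$ let $$(x_1^*(\boldsymbol{\alpha}),\dots,x_n^*(\boldsymbol{\alpha}))=\arg\max_{x_r>0,\ \sum_{r=1}^n x_r\le P}\ \sum_{r=1}^n\frac{x_r^{1-\alpha_r}}{1-\alpha_r},\qquad \Psi(\boldsymbol{\alpha})=\sum_{r=1}^n\frac{x_r^*(\boldsymbol{\alpha})^{1-\widetilde\alpha_r}}{1-\widetilde\alpha_r}.$$ Let $\boldsymbol{\alpha}^*\in\arg\max_{\boldsymbol{\alpha}\in\mathcal{A}}\Psi(\boldsymbol{\alpha})$ be any solution. Then $(x_1^*(\boldsymbol{\alpha}^* ),\dots,x_n^*(\boldsymbol{\alpha}^* ))$ is a solution of $$\max_{x_1,\dots,x_n}\ \sum_{r=1}^n\frac{x_r^{1-\widetilde\alpha_r}}{1-\widetilde\alpha_r}\quad\text{subject to}\quad \sum_{r=1}^nx_r\le P,\ x_r>0,\ r=1,\dots,n.$$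
   Context: This is a single-link network shared by $n$ users with link capacity $P$; the upper-level true utilities are $\alpha$-fairness functions with parameters $\widetilde\alpha_r$, and the lower level allocates rates using $\alpha$-fairness surrogate utilities with tunable parameters $\alpha_r$. *)

From mathcomp Require Import all_boot all_order all_algebra.
From mathcomp Require Import all_classical all_reals all_analysis.
Set Implicit Arguments. Unset Strict Implicit. Unset Printing Implicit Defensive.
Import Order.TTheory GRing.Theory Num.Theory.
Local Open Scope ring_scope.

Definition alpha_util {R : realType} (a x : R) : R :=
  if a == 1 then ln x else x `^ (1 - a) / (1 - a).

Definition total_util {R : realType} {n : nat} (a x : 'I_n -> R) : R :=
  \sum_(r < n) alpha_util (a r) (x r).

Definition feasible {R : realType} {n : nat} (P : R) (x : 'I_n -> R) : Prop :=
  (forall r, 0 < x r) /\ \sum_(r < n) x r <= P.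

Definition is_opt_alloc {R : realType} {n : nat} (P : R) (a x : 'I_n -> R) : Prop :=
  feasible P x /\ forall y, feasible P y -> total_util a y <= total_util a x.

Definition param_set {R : realType} {n : nat} (b : R) (a : 'I_n -> R) : Prop :=
  forall r, 0 < a r <= b.

From mathcomp Require Import all_boot all_order all_algebra.
From mathcomp Require Import all_classical all_reals all_analysis.
Import Order.TTheory GRing.Theory Num.Theory.
Import numFieldNormedType.Exports.
Set Implicit Arguments. Unset Strict Implicit. Unset Printing Implicit Defensive.
Local Open Scope classical_set_scope.
Local Open Scope ring_scope.

(* Every allocation whose marginal utilities x_r^(-a_r) all coincide and which
   saturates the link is the unique optimum (strict concavity).  Such an
   allocation for the true parameters atil, x_r = s^(1/atil_r), also has equal
   marginals for the scaled parameters t * atil, and for t small these lie in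
   the parameter set.  Hence the lower level at t * atil already returns the
   true optimum, so Psi(alpha^star) >= Psi(t * atil) is the optimal true utility. *)

Section StrictConcavity.
Variable R : realType.
Implicit Types a c x y : R.

Lemma is_derive_alpha_util a c : 0 < c ->
  is_derive c 1 (alpha_util a) (c `^ (- a)).
Proof.
move=> c0; have [->|a1] := eqVneq a 1.
  have -> : alpha_util 1 = @ln R by apply/funext => x; rewrite /alpha_util eqxx.
  by rewrite powR_inv1 ?ltW //; exact: is_derive1_ln.
have -> : alpha_util a = (1 - a)^-1 \*: ((@powR R) ^~ (1 - a)).
  by apply/funext => x; rewrite /alpha_util (negbTE a1) /= mulrC.
have a1' : 1 - a != 0 by rewrite subr_eq0 eq_sym.
apply: is_derive_eq; first exact: is_deriveZ (is_derive1_powR _ c0).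
rewrite -[_ *: _]/(_ * _) mulrA mulVf // mul1r.
by rewrite addrAC subrr add0r.
Qed.

Lemma MVT_pos (f df : R -> R) x y :
  (forall c, 0 < c -> is_derive c 1 f (df c)) -> 0 < x -> x < y ->
  exists2 c, x < c < y & f y - f x = df c * (y - x).
Proof.
move=> fdf x0 xy.
have fdf_itv c : x <= c -> is_derive c 1 f (df c).
  by move=> xc; apply: fdf; exact: lt_le_trans xc.
have dfI c : c \in `]x, y[ -> is_derive c 1 f (df c).
  by rewrite in_itv /= => /andP[/ltW xc _]; exact: fdf_itv.
have fcont : {within `[x, y], continuous f}.
  apply: derivable_within_continuous => c /[!in_itv] /= /andP[xc _].
  by have [] := fdf_itv c xc.
have [c cxy fyx] := MVT xy dfI fcont.
by exists c; first by move: cxy; rewrite in_itv.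
Qed.

Lemma lt_tangent_pos (f df : R -> R) x y :
  (forall c, 0 < c -> is_derive c 1 f (df c)) ->
  {in Num.pos &, forall u v, u < v -> df v < df u} ->
  0 < x -> 0 < y -> x != y -> f y - f x < df x * (y - x).
Proof.
move=> fdf df_decr x0 y0; rewrite neq_lt => /orP[xy|yx].
  have [c /andP[xc _] ->] := MVT_pos fdf x0 xy.
  by rewrite ltr_pM2r ?subr_gt0 // df_decr ?posrE // (lt_trans x0).
have [c /andP[yc cx] fyx] := MVT_pos fdf y0 yx.
rewrite -opprB fyx -[y - x]opprB !mulrN ltrN2 ltr_pM2r ?subr_gt0 //.
by rewrite df_decr ?posrE // (lt_trans y0).
Qed.

Lemma alpha_util_lt_tangent a x y : 0 < a -> 0 < x -> 0 < y -> x != y ->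
  alpha_util a y - alpha_util a x < x `^ (- a) * (y - x).
Proof.
move=> a0.
apply: (lt_tangent_pos (df := fun c => c `^ (- a))) => [c|u v u0 v0 uv].
  exact: is_derive_alpha_util.
rewrite !powRN ltf_pV2 ?posrE ?powR_gt0 //.
apply: gt0_ltr_powR => //; rewrite nnegrE; exact: ltW.
Qed.

End StrictConcavity.

Section KKTAllocation.
Variables (R : realType) (n : nat).
Implicit Types (P : R) (a c x y : 'I_n -> R).

Lemma exists_sum_powR_eq c P : (0 < n)%N -> 0 < P -> (forall r, 0 < c r) ->
  exists2 s, 0 < s & \sum_(r < n) s `^ c r = P.
Proof.
move=> n0 P0 c0; pose r0 : 'I_n := Ordinal n0.
pose f := \sum_(r < n) (@powR R ^~ (c r)).
have fE s : f s = \sum_(r < n) s `^ c r by rewrite /f fct_sumE.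
pose root r (u : R) := u `^ (c r)^-1.
have rootK r (u : R) : 0 <= u -> root r u `^ c r = u.
  by move=> u0; rewrite -powRrM mulVf ?gt_eqF // powRr1.
have Pn0 : 0 < P / n%:R by rewrite divr_gt0 // ltr0n.
pose s1 := \big[Num.min/1]_(r < n) root r (P / n%:R).
pose s2 := root r0 P.
have s1_gt0 : 0 < s1 by apply/bigmin_gtP; split=> // r _; exact: powR_gt0.
have s1_le r : s1 <= root r (P / n%:R) by exact: bigmin_le.
have s12 : s1 <= s2.
  have PnP : P / n%:R <= P.
    by rewrite ler_pdivrMr ?ltr0n // ler_peMr ?ler1n // ltW.
  apply: le_trans (s1_le r0) _.
  by apply: ge0_ler_powR => //; rewrite ?nnegrE ?invr_ge0; exact: ltW.
have fs1 : f s1 <= P.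
  rewrite fE; apply: (@le_trans _ _ (\sum_(r < n) P / n%:R)).
    apply: ler_sum => r _; rewrite -[leRHS](rootK r); last exact: ltW.
    apply: ge0_ler_powR => //; rewrite ?nnegrE ?powR_ge0 //; exact: ltW.
  by rewrite sumr_const card_ord -(mulr_natr (P / n%:R)) divfK // pnatr_eq0 -lt0n.
have fs2 : P <= f s2.
  rewrite fE (bigD1 r0) //= rootK; last exact: ltW.
  by rewrite lerDl; apply: sumr_ge0 => r _; exact: powR_ge0.
have fcont : {within `[s1, s2], continuous f}.
  apply: derivable_within_continuous => s /[!in_itv] /= /andP[s1s _].
  apply: derivable_sum => r.
  by have [] := is_derive1_powR (c r) (lt_le_trans s1_gt0 s1s).
have [|s /[!in_itv] /= /andP[s1s _] fsP] := IVT (v := P) s12 fcont.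
  by rewrite ge_min fs1 le_max fs2 orbT.
by exists s; [exact: lt_le_trans s1s | rewrite -fE].
Qed.

(* The KKT conditions of the concave lower-level program: the link is saturated
   and every marginal utility x_r^(-a_r) equals the same link price. *)
Definition kkt_alloc P a x : Prop :=
  [/\ forall r, 0 < x r, \sum_(r < n) x r = P
    & exists lam, forall r, x r `^ (- a r) = lam].

Lemma exists_kkt_alloc P a : (0 < n)%N -> 0 < P -> (forall r, 0 < a r) ->
  exists x, kkt_alloc P a x.
Proof.
move=> n0 P0 a0; have ainv0 r : 0 < (a r)^-1 by rewrite invr_gt0.
have [s s0 sP] := exists_sum_powR_eq n0 P0 ainv0.
exists (fun r => s `^ (a r)^-1); split=> [r|//|]; first exact: powR_gt0.
by exists (s `^ (-1)) => r; rewrite -powRrM mulrN mulVf ?gt_eqF.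
Qed.

Lemma kkt_alloc_scale P a x t :
  kkt_alloc P a x -> kkt_alloc P (fun r => t * a r) x.
Proof.
case=> x0 sx [lam xlam]; split=> //.
by exists (lam `^ t) => r; rewrite -(xlam r) -powRrM mulNr mulrC.
Qed.

Lemma kkt_alloc_lt P a x y : (forall r, 0 < a r) -> kkt_alloc P a x ->
  feasible P y -> y <> x -> total_util a y < total_util a x.
Proof.
move=> a0 [x0 sx [lam xlam]] [y0 sy] yx.
have /existsNP [r0 /eqP yx0] : ~ forall r, y r = x r.
  by move=> yxE; apply: yx; apply/funext.
have tangent r : y r != x r ->
    alpha_util (a r) (y r) - alpha_util (a r) (x r) < lam * (y r - x r).
  by move=> yxr; rewrite -(xlam r) alpha_util_lt_tangent // eq_sym.
rewrite -subr_lt0 /total_util -sumrB.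
apply: (@lt_le_trans _ _ (\sum_(r < n) lam * (y r - x r))).
  rewrite (bigD1 r0) //= [ltRHS](bigD1 r0) //=.
  apply: ltr_leD; first exact: tangent.
  apply: ler_sum => r _; have [->|yxr] := eqVneq (y r) (x r).
    by rewrite !subrr mulr0.
  exact/ltW/tangent.
by rewrite -mulr_sumr sumrB sx mulr_ge0_le0 ?subr_le0 // -(xlam r0) powR_ge0.
Qed.

Lemma kkt_alloc_opt P a x : (forall r, 0 < a r) -> kkt_alloc P a x ->
  is_opt_alloc P a x.
Proof.
move=> a0 kx; have [x0 sx _] := kx.
split=> [|y fy]; first by split=> //; rewrite sx.
have [->//|yx] := pselect (y = x).
exact/ltW/(kkt_alloc_lt a0 kx fy yx).
Qed.

Lemma opt_alloc_eq_kkt P a x y : (forall r, 0 < a r) ->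
  is_opt_alloc P a y -> kkt_alloc P a x -> y = x.
Proof.
move=> a0 [fy yopt] kx; apply: contrapT => yx.
have [fx _] := kkt_alloc_opt a0 kx.
by move: (kkt_alloc_lt a0 kx fy yx); rewrite ltNge (yopt x fx).
Qed.

Lemma param_set_scale b a : 0 < b -> (forall r, 0 < a r) ->
  exists t, param_set b (fun r => t * a r).
Proof.
move=> b0 a0; pose S := 1 + \sum_(r < n) a r.
have aS r : a r <= S.
  rewrite /S (bigD1 r) //= addrCA lerDl addr_ge0 //.
  by apply: sumr_ge0 => i _; exact: ltW.
have S0 : 0 < S by rewrite ltr_wpDr // sumr_ge0 // => r _; exact: ltW.
exists (b / S) => r; rewrite mulr_gt0 ?divr_gt0 //=.
by rewrite mulrAC ler_pdivrMr // ler_pM2l.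
Qed.

End KKTAllocation.

Theorem theorem2 (R : realType) (n : nat) (P b : R) (atil : 'I_n -> R)
    (xstar : ('I_n -> R) -> ('I_n -> R)) (astar : 'I_n -> R) :
  (0 < n)%N -> 0 < P -> 0 < b -> (forall r, 0 < atil r) ->
  (forall a, param_set b a -> is_opt_alloc P a (xstar a)) ->
  param_set b astar ->
  (forall a, param_set b a -> total_util atil (xstar a) <= total_util atil (xstar astar)) ->
  is_opt_alloc P atil (xstar astar).
Proof.
move=> n0 P0 b0 atil0 xstar_opt astar_in astar_max.
have [xt xt_kkt] := exists_kkt_alloc n0 P0 atil0.
have [t a_in] := param_set_scale b0 atil0.
have a0 r : 0 < t * atil r by case/andP: (a_in r).
have xstar_a : xstar (fun r => t * atil r) = xt.
  exact: opt_alloc_eq_kkt a0 (xstar_opt _ a_in) (kkt_alloc_scale t xt_kkt).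
split; first exact: (xstar_opt _ astar_in).1.
move=> y fy; apply: le_trans ((kkt_alloc_opt atil0 xt_kkt).2 y fy) _.
by rewrite -xstar_a; exact: astar_max.
Qed.
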